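(* Assume the multi-layer setting below with $\nabla f$ being $\hat L$-Lipschitz, and consider the multi-layer SAM flow at a point where not all $g_{k,l}$ vanish. Then for every layer $l\in[D]$, $$\frac{dQ_l}{dt}=4\rho u_D K_l\cdot\mathrm{Cov}_l\big(\|\mathcal G_{k,l}\|_F^2,\|g_{k,l}\|_F^2\big)+R_l,$$ where there is a constant $C$ depending only on $\Phi_1,\ldots,\Phi_D$, the $K_l$, $\hat L$, the Frobenius norms of all current cores and the norm of $\nabla f$ at the current point, such that $|R_l|\le C\rho^2$ for all $\rho\in(0,1]$.
   Context: Multi-layer setting: there are $D$ layers. Layer $l\in[D]$ has $K_l\ge2$ cores $\mathcal G_{1,l},\ldots,\mathcal G_{K_l,l}$ lying in finite-dimensional real tensor spaces (Frobenius inner product $\langle\cdot,\cdot\rangle_F$, norm $\|\cdot\|_F$), and a multilinear map $\Phi_l$ producing the layer tensor $\mathcal T_l=\Phi_l(\mathcal G_{1,l},\ldots,\mathcal G_{K_l,l})$. The loss is $F=f(\mathcal T_1,\ldots,\mathcal T_D)$ with $f$ continuously differentiable and its full gradient $\hat L$-Lipschitz: $\|\nabla f(\mathcal X)-\nabla f(\mathcal Y)\|\le \hat L\|\mathcal X-\mathcal Y\|$ where $\|\mathcal X\|^2=\sum_l\|\mathcal X_l\|_F^2$. Multi-layer SAM flow with radius $\rho>0$: $g_{k,l}=\nabla_{\mathcal G_{k,l}}F$ at the current cores, $u_D=(\sum_{l=1}^D\sum_{k=1}^{K_l}\|g_{k,l}\|_F^2)^{-1/2}$, $\tilde{\mathcal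 G}_{k,l}=\mathcal G_{k,l}+\rho u_D g_{k,l}$, $\tilde g_{k,l}=\nabla_{\mathcal G_{k,l}}F$ evaluated at all perturbed cores, and $\frac{d}{dt}\mathcal G_{k,l}=-\tilde g_{k,l}$. The layer-wise Norm Deviation is $Q_l:=\sum_{k=1}^{K_l}\big(\|\mathcal G_{k,l}\|_F^2-\frac1{K_l}\sum_{i=1}^{K_l}\|\mathcal G_{i,l}\|_F^2\big)^2$, and $\mathrm{Cov}_l(x_k,y_k):=\frac1{K_l}\sum_{k=1}^{K_l}(x_k-\bar x)(y_k-\bar y)$ with means over $k\in[K_l]$. *)

From HB Require Import structures.
From mathcomp Require Import all_boot all_order all_algebra.
From mathcomp Require Import all_classical all_reals all_analysis.
Import Order.TTheory GRing.Theory Num.Theory.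
Import numFieldNormedType.Exports.
Local Open Scope ring_scope.

(* Each core G_{k,l} lives in a finite-dimensional real
   tensor space, identified (by flattening) with R^(n l k) with the Euclidean
   = Frobenius inner product.  Layer tensors T_l live in R^(m l). *)

(* coordinates of the cores of layer l : pairs (k, i), k core index, i entry *)
Definition LCoord (D : nat) (K : 'I_D -> nat) (n : forall l, 'I_(K l) -> nat)
  (l : 'I_D) : Type := {k : 'I_(K l) & 'I_(n l k)}.
Arguments LCoord {D K} n l.
Definition Coord (D : nat) (K : 'I_D -> nat) (n : forall l, 'I_(K l) -> nat)
  : Type := {l : 'I_D & LCoord n l}.
Arguments Coord {D K} n.
Definition CIdx (D : nat) (K : 'I_D -> nat) : Type := {l : 'I_D & 'I_(K l)}.
Arguments CIdx {D} K.
Definition OCoord (D : nat) (m : 'I_D -> nat) : Type := {l : 'I_D & 'I_(m l)}.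
Arguments OCoord {D} m.

Definition coord (D : nat) (K : 'I_D -> nat) (n : forall l, 'I_(K l) -> nat)
  (l : 'I_D) (k : 'I_(K l)) (i : 'I_(n l k)) : Coord n :=
  existT _ l (existT _ k i).
Arguments coord {D K n l} k i.

Definition splice (R : Type) (D : nat) (K : 'I_D -> nat)
  (n : forall l, 'I_(K l) -> nat) (l : 'I_D)
  (z v : LCoord n l -> R) (k : 'I_(K l)) : LCoord n l -> R :=
  fun c => if tag c == k then v c else z c.
Arguments splice {R D K n l} z v k _.

Definition multilinear (R : realType) (D : nat) (K : 'I_D -> nat)
  (n : forall l, 'I_(K l) -> nat) (m : 'I_D -> nat) (l : 'I_D)
  (Phil : (LCoord n l -> R) -> 'I_(m l) -> R) : Prop :=
  forall (k : 'I_(K l)) (z v w : LCoord n l -> R) (a : R) (i : 'I_(m l)),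
    Phil (splice z (fun c => a * v c + w c) k) i
    = a * Phil (splice z v k) i + Phil (splice z w k) i.
Arguments multilinear {R D K n m l} Phil.

Definition layer (R : Type) (D : nat) (K : 'I_D -> nat)
  (n : forall l, 'I_(K l) -> nat) (theta : Coord n -> R) (l : 'I_D)
  : LCoord n l -> R := fun c => theta (existT _ l c).
Arguments layer {R D K n} theta l.

Definition layer_tensors (R : Type) (D : nat) (K : 'I_D -> nat)
  (n : forall l, 'I_(K l) -> nat) (m : 'I_D -> nat)
  (Phi : forall l, (LCoord n l -> R) -> 'I_(m l) -> R)
  (theta : Coord n -> R) : OCoord m -> R :=
  fun o => Phi (tag o) (layer theta (tag o)) (tagged o).
Arguments layer_tensors {R D K n m} Phi theta _.

Definition csum (R : realType) (D : nat) (K : 'I_D -> nat)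
  (n : forall l, 'I_(K l) -> nat) (x : Coord n -> R) : R :=
  \sum_(l < D) \sum_(k < K l) \sum_(i < n l k) x (coord k i).
Arguments csum {R D K n} x.
Definition osum (R : realType) (D : nat) (m : 'I_D -> nat)
  (x : OCoord m -> R) : R :=
  \sum_(l < D) \sum_(i < m l) x (existT _ l i).
Arguments osum {R D m} x.

Definition bumpc (R : realType) (X : eqType) (theta : X -> R) (x : X) (t : R)
  : X -> R := fun y => theta y + (if y == x then t else 0).
Arguments bumpc {R X} theta x t _.

Definition pderiv (R : realType) (X : eqType) (h : (X -> R) -> R)
  (theta : X -> R) (x : X) : R :=
  derive1 (fun t : R => h (bumpc theta x t)) 0.
Arguments pderiv {R X} h theta x.

Definition lossF (R : realType) (D : nat) (K : 'I_D -> nat)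
  (n : forall l, 'I_(K l) -> nat) (m : 'I_D -> nat)
  (Phi : forall l, (LCoord n l -> R) -> 'I_(m l) -> R)
  (f : (OCoord m -> R) -> R) (theta : Coord n -> R) : R :=
  f (layer_tensors Phi theta).
Arguments lossF {R D K n m} Phi f theta.

Definition gradF (R : realType) (D : nat) (K : 'I_D -> nat)
  (n : forall l, 'I_(K l) -> nat) (m : 'I_D -> nat)
  (Phi : forall l, (LCoord n l -> R) -> 'I_(m l) -> R)
  (f : (OCoord m -> R) -> R) (theta : Coord n -> R) : Coord n -> R :=
  pderiv (lossF Phi f) theta.
Arguments gradF {R D K n m} Phi f theta _.

Definition uD (R : realType) (D : nat) (K : 'I_D -> nat)
  (n : forall l, 'I_(K l) -> nat) (m : 'I_D -> nat)
  (Phi : forall l, (LCoord n l -> R) -> 'I_(m l) -> R)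
  (f : (OCoord m -> R) -> R) (theta : Coord n -> R) : R :=
  (Num.sqrt (csum (fun x => gradF Phi f theta x ^+ 2)))^-1.
Arguments uD {R D K n m} Phi f theta.

Definition samgrad (R : realType) (D : nat) (K : 'I_D -> nat)
  (n : forall l, 'I_(K l) -> nat) (m : 'I_D -> nat)
  (Phi : forall l, (LCoord n l -> R) -> 'I_(m l) -> R)
  (f : (OCoord m -> R) -> R) (rho : R) (theta : Coord n -> R) : Coord n -> R :=
  gradF Phi f (fun y => theta y + rho * uD Phi f theta * gradF Phi f theta y).
Arguments samgrad {R D K n m} Phi f rho theta _.

Definition coresq (R : realType) (D : nat) (K : 'I_D -> nat)
  (n : forall l, 'I_(K l) -> nat) (theta : Coord n -> R)
  (l : 'I_D) (k : 'I_(K l)) : R :=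
  \sum_(i < n l k) theta (coord k i) ^+ 2.
Arguments coresq {R D K n} theta l k.

Definition meanK (R : realType) (N : nat) (x : 'I_N -> R) : R :=
  N%:R^-1 * \sum_(i < N) x i.
Arguments meanK {R N} x.

Definition covK (R : realType) (N : nat) (x y : 'I_N -> R) : R :=
  N%:R^-1 * \sum_(k < N) (x k - meanK x) * (y k - meanK y).
Arguments covK {R N} x y.

Definition normdev (R : realType) (D : nat) (K : 'I_D -> nat)
  (n : forall l, 'I_(K l) -> nat) (theta : Coord n -> R) (l : 'I_D) : R :=
  \sum_(k < K l) (coresq theta l k - meanK (fun i => coresq theta l i)) ^+ 2.
Arguments normdev {R D K n} theta l.

HB.instance Definition _ (D : nat) (K : 'I_D -> nat)
  (n : forall l, 'I_(K l) -> nat) (l : 'I_D) :=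
  Equality.copy (LCoord n l) {k : 'I_(K l) & 'I_(n l k)}.
HB.instance Definition _ (D : nat) (K : 'I_D -> nat)
  (n : forall l, 'I_(K l) -> nat) :=
  Equality.copy (Coord n) {l : 'I_D & LCoord n l}.
HB.instance Definition _ (D : nat) (m : 'I_D -> nat) :=
  Equality.copy (OCoord m) {l : 'I_D & 'I_(m l)}.

From Pilot Require Import Defs.
From HB Require Import structures.
From mathcomp Require Import all_boot all_order all_algebra.
From mathcomp Require Import all_classical all_reals all_analysis.
From mathcomp Require Import ring lra.
Import Order.TTheory GRing.Theory Num.Theory.
Import numFieldNormedType.Exports.
Local Open Scope ring_scope.

(* Write s_k = ||G_k||^2 for the cores of layer l, g = grad F at G, and
   g~ = grad F at the perturbed point G~ = G + rho u_D g.  Along the flow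
   ds_k/dt = -2 <G_k, g~_k>.  Multilinearity of Phi_l gives an Euler identity:
   <G~_k, g~_k> = <grad f(T(G~)), T_l(G~)> is the same number E for every core k.
   Hence ds_k/dt = -2 E + 2 rho u_D <g_k, g~_k>, and since the deviations
   s_k - mean(s) sum to zero, the common term E drops out of dQ_l/dt:
     dQ_l/dt = 4 rho u_D sum_k (s_k - mean s) <g_k, g~_k>.
   Replacing g~_k by g_k gives exactly the covariance term, so the remainder is
   4 rho u_D sum_k (s_k - mean s) <g_k, g~_k - g_k>.  Here |u_D g| <= 1, and the
   gradient is Lipschitz on bounded sets (f has Lipschitz gradient and the
   multilinear Phi_l are bounded and Lipschitz on boxes), while G~ - G has size
   at most rho; so g~ - g = O(rho) and the remainder is O(rho^2). *)

(* MathComp's [coord] from vector.v would otherwise shadow the one of Defs. *)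
Local Notation coord := Defs.coord (only parsing).

HB.instance Definition _ (D : nat) (K : 'I_D -> nat)
  (n : forall l, 'I_(K l) -> nat) (l : 'I_D) :=
  Finite.copy (LCoord n l) {k : 'I_(K l) & 'I_(n l k)}.
HB.instance Definition _ (D : nat) (K : 'I_D -> nat)
  (n : forall l, 'I_(K l) -> nat) :=
  Finite.copy (Coord n) {l : 'I_D & LCoord n l}.
HB.instance Definition _ (D : nat) (m : 'I_D -> nat) :=
  Finite.copy (OCoord m) {l : 'I_D & 'I_(m l)}.

(** * Finite sums and norms *)

Lemma ler_term_sum {R : numDomainType} {I : finType} (F : I -> R) j :
  (forall i, 0 <= F i) -> F j <= \sum_i F i.
Proof. by move=> F0; rewrite (bigD1 j) //= lerDl sumr_ge0. Qed.

Lemma normr_le_sqrt_sum_sqr {R : rcfType} {I : finType} (F : I -> R) j :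
  `|F j| <= Num.sqrt (\sum_i F i ^+ 2).
Proof.
rewrite -sqrtr_sqr ler_wsqrtr // (ler_term_sum (fun i => F i ^+ 2)) // => i.
exact: sqr_ge0.
Qed.

Lemma sqrt_sum_sqr_le_sum_norm {R : rcfType} {I : finType} (F : I -> R) :
  Num.sqrt (\sum_i F i ^+ 2) <= \sum_i `|F i|.
Proof.
rewrite -[X in _ <= X]ger0_norm ?sumr_ge0 // -sqrtr_sqr ler_wsqrtr //.
rewrite expr2 mulr_suml; apply: ler_sum => i _.
rewrite -[F i ^+ 2]real_normK ?num_real // expr2 ler_wpM2l //.
exact: (ler_term_sum (fun i => `|F i|)).
Qed.

Lemma sum_sqr_le_sqr_sum {R : rcfType} {I : finType} (F : I -> R) :
  (forall i, 0 <= F i) -> \sum_i F i ^+ 2 <= (\sum_i F i) ^+ 2.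
Proof.
move=> F0; have := sqrt_sum_sqr_le_sum_norm F.
have -> : \sum_i `|F i| = \sum_i F i by apply: eq_bigr => i _; rewrite ger0_norm.
have sq0 : 0 <= \sum_i F i ^+ 2 by apply: sumr_ge0 => i _; apply: sqr_ge0.
by rewrite -ler_sqr ?nnegrE ?sqrtr_ge0 ?sumr_ge0 // sqr_sqrtr.
Qed.

(* The inverse of a zero norm is 0, so this also holds for v = 0. *)
Lemma normr_normalized_le1 {R : rcfType} {I : finType} (v : I -> R) j :
  `|(Num.sqrt (\sum_i v i ^+ 2))^-1 * v j| <= 1.
Proof.
have [->|s0] := eqVneq (Num.sqrt (\sum_i v i ^+ 2)) 0.
  by rewrite invr0 mul0r normr0.
rewrite normrM ger0_norm ?invr_ge0 ?sqrtr_ge0 // mulrC ler_pdivrMr ?mul1r.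
  exact: normr_le_sqrt_sum_sqr.
by rewrite lt_def s0 sqrtr_ge0.
Qed.

Lemma lipschitz_l2_l1 {R : rcfType} {X : finType} (h : (X -> R) -> X -> R) (L : R) :
  (forall P Q, Num.sqrt (\sum_o (h P o - h Q o) ^+ 2)
                 <= L * Num.sqrt (\sum_o (P o - Q o) ^+ 2)) ->
  forall P Q o, `|h P o - h Q o| <= `|L| * \sum_o `|P o - Q o|.
Proof.
move=> hL P Q o; apply: le_trans (normr_le_sqrt_sum_sqr (fun o => h P o - h Q o) o) _.
apply: le_trans (hL P Q) _; apply: le_trans (ler_wpM2r (sqrtr_ge0 _) (ler_norm L)) _.
by rewrite ler_wpM2l // sqrt_sum_sqr_le_sum_norm.
Qed.

(** * One-variable calculus *)

Section RealCalculus.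
Local Open Scope classical_set_scope.
Context {R : realType}.

Lemma mvt_affine_error (phi dphi : R -> R) (a B w : R) :
  (forall t : R, is_derive t (1 : R) phi (dphi t)) ->
  (forall c, `|c| <= `|w| -> `|dphi c - a| <= B) ->
  `|phi w - phi 0 - a * w| <= B * `|w|.
Proof.
move=> dphiE dphi_near.
pose psi t := phi t - a * t.
have dpsiE (t : R) : is_derive t (1 : R) psi (dphi t - a).
  have := is_deriveB (dphiE t) (is_deriveZ a (is_derive_id t (1 : R))).
  by rewrite [_%:A]mulr1.
have psi_cont u v : {within `[u, v], continuous psi}.
  apply: continuous_subspaceT => x; have [dx _] := dpsiE x.
  by apply: differentiable_continuous; apply/derivable1_diffP.
have -> : phi w - phi 0 - a * w = psi w - psi 0 by rewrite /psi mulr0 subr0 addrAC.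
have [w0|w0] := leP 0 w.
  have [c /andP[c0 cw] ->] := MVT_segment w0 (fun x _ => dpsiE x) (psi_cont 0 w).
  rewrite subr0 normrM ler_wpM2r // dphi_near //.
  by rewrite !ger0_norm // (le_trans c0 cw).
have [c /andP[wc c0] E] := MVT_segment (ltW w0) (fun x _ => dpsiE x) (psi_cont w 0).
rewrite -opprB E normrN normrM sub0r normrN ler_wpM2r // dphi_near //.
by rewrite !ler0_norm ?lerN2 // ltW.
Qed.

Lemma derivable_shift_is_derive (phi : R -> R) (t : R) :
  derivable (fun s => phi (s + t)) 0 1 ->
  is_derive t (1 : R) phi (derive1 (fun s => phi (s + t)) 0).
Proof.
have E : (fun h : R => h^-1 *: ((phi \o shift t) (h *: 1) - phi t)) =
  (fun h => h^-1 *: (((fun s => phi (s + t)) \o shift 0) (h *: 1) - phi (0 + t))).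
  by apply/funext => h /=; rewrite addr0 add0r.
move=> dphi; apply: DeriveDef; first by rewrite /derivable E.
by rewrite derive1E /derive E.
Qed.

Lemma derive1_quadratic_error (h : R -> R) (d c : R) :
  (forall k, `|h k - h 0 - k * d| <= c * k ^+ 2) -> derive1 h 0 = d.
Proof.
move=> herr; rewrite /derive1; apply: cvg_lim => //.
apply/cvgrPdist_le => e e0; near=> k.
have k0 : k != 0 by near: k; exact: nbhs_dnbhs_neq.
have c1 : 0 < `|c| + 1 by apply: ltr_pwDr.
have ke : `|k| <= e / (`|c| + 1) by near: k; apply: dnbhs0_le; exact: divr_gt0.
have kp : 0 < `|k| by rewrite normr_gt0.
have -> : d - k^-1 *: (h (k + 0) - h 0) = - (k^-1 * (h k - h 0 - k * d)).
  rewrite addr0 /GRing.scale /= mulrBr mulrBr mulrA mulVf // mul1r; lra.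
rewrite normrN normrM normrV ?unitfE // ler_pdivrMl //.
apply: le_trans (herr k) _; apply: le_trans (_ : `|c| * `|k| ^+ 2 <= _).
  by rewrite real_normK ?num_real // ler_wpM2r ?sqr_ge0 // ler_norm.
have ck : `|c| * `|k| <= e.
  move: ke; rewrite ler_pdivlMr // => ke; apply: le_trans ke.
  by rewrite mulrC ler_wpM2l // lerDl.
by rewrite expr2 mulrA [`|k| * e]mulrC ler_wpM2r.
Unshelve. all: by end_near.
Qed.

End RealCalculus.

(** * First-order expansion of a function with Lipschitz partial derivatives *)

Section FirstOrderError.
Context {R : realType} {X : finType} {f : (X -> R) -> R} {L : R}.
Hypothesis L_ge0 : 0 <= L.
Hypothesis f_pderiv : forall P x, derivable (fun t : R => f (bumpc P x t)) 0 1.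
Hypothesis pderiv_lipschitz : forall P Q x,
  `|pderiv f P x - pderiv f Q x| <= L * \sum_y `|P y - Q y|.

Lemma bumpc_bumpc (Q : X -> R) x t s : bumpc (bumpc Q x t) x s = bumpc Q x (s + t).
Proof.
by apply/funext => y; rewrite /bumpc; case: (y == x); rewrite ?addr0 // addrAC addrA.
Qed.

Lemma bumpc0 (Q : X -> R) x : bumpc Q x 0 = Q.
Proof. by apply/funext => y; rewrite /bumpc; case: (y == x); rewrite addr0. Qed.

Lemma is_derive_bumpc Q x (t : R) :
  is_derive t (1 : R) (fun s => f (bumpc Q x s)) (pderiv f (bumpc Q x t) x).
Proof.
have shiftE : (fun s => f (bumpc (bumpc Q x t) x s)) = (fun s => f (bumpc Q x (s + t))).
  by apply/funext => s; rewrite bumpc_bumpc.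
by rewrite /pderiv shiftE; apply: derivable_shift_is_derive; rewrite -shiftE.
Qed.

Lemma bumpc_first_order_error P Q x w :
  `|f (bumpc Q x w) - f Q - pderiv f P x * w|
    <= L * (\sum_y `|Q y - P y| + `|w|) * `|w|.
Proof.
have := mvt_affine_error _ _ (pderiv f P x) (L * (\sum_y `|Q y - P y| + `|w|)) w
  (is_derive_bumpc Q x).
rewrite /= bumpc0; apply=> c cw.
apply: le_trans (pderiv_lipschitz _ _ _) _; apply: ler_wpM2l => //.
apply: le_trans (_ : \sum_y (`|Q y - P y| + `|if y == x then c else 0|) <= _).
  by apply: ler_sum => y _; rewrite /bumpc addrAC; apply: ler_normD.
rewrite big_split /= lerD2l (bigD1 x) //= eqxx big1 ?addr0 //.
by move=> y /negPf ->; rewrite normr0.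
Qed.

(* Induction on the support of the increment, one coordinate at a time. *)
Lemma first_order_error P W :
  `|f (fun y => P y + W y) - f P - \sum_y pderiv f P y * W y|
    <= L * (\sum_y `|W y|) ^+ 2.
Proof.
suff supp_error (s : seq X) V : (forall y, y \notin s -> V y = 0) ->
    `|f (fun y => P y + V y) - f P - \sum_y pderiv f P y * V y|
      <= L * (\sum_y `|V y|) ^+ 2.
  by apply: (supp_error (enum X)) => y; rewrite mem_enum.
elim: s V => [|x s IHs] V Vs.
  have V0 y : V y = 0 by apply: Vs.
  have -> : (fun y => P y + V y) = P by apply/funext => y; rewrite V0 addr0.
  rewrite subrr sub0r normrN big1 ?normr0 => [|y _]; last by rewrite V0 mulr0.
  by rewrite mulr_ge0 ?sqr_ge0.
pose V' y := if y == x then 0 else V y.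
have V's y : y \notin s -> V' y = 0.
  by rewrite /V'; case: eqP => // /eqP yx ys; apply: Vs; rewrite in_cons negb_or yx.
pose Q y := P y + V' y.
have -> : (fun y => P y + V y) = bumpc Q x (V x).
  by apply/funext => y; rewrite /bumpc /Q /V'; case: eqP => [->|_]; lra.
have splitV (F : X -> R -> R) : (forall y, F y 0 = 0) ->
    \sum_y F y (V y) = F x (V x) + \sum_y F y (V' y).
  move=> F0; rewrite (bigD1 x) //= [in RHS](bigD1 x) //= /V' eqxx F0 add0r.
  by congr (_ + _); apply: eq_bigr => y /negPf ->.
rewrite (splitV (fun y v => pderiv f P y * v)) => [|y]; last exact: mulr0.
rewrite (splitV (fun _ v => `|v|)) => [|y]; last exact: normr0.
have err_x := bumpc_first_order_error P Q x (V x).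
have QP : \sum_y `|Q y - P y| = \sum_y `|V' y|.
  by apply: eq_bigr => y _; rewrite /Q addrC addKr.
rewrite QP in err_x.
have err_s := IHs V' V's.
have V'0 : 0 <= \sum_y `|V' y| by apply: sumr_ge0.
have -> : f (bumpc Q x (V x)) - f P - (pderiv f P x * V x + \sum_y pderiv f P y * V' y)
    = (f (bumpc Q x (V x)) - f Q - pderiv f P x * V x)
      + (f Q - f P - \sum_y pderiv f P y * V' y) by lra.
apply: le_trans (ler_normD _ _) _; apply: le_trans (lerD err_x err_s) _.
have := mulr_ge0 L_ge0 (mulr_ge0 (normr_ge0 (V x)) V'0); nra.
Qed.

Lemma derive1_along_line P V :
  derive1 (fun t => f (fun y => P y + t * V y)) 0 = \sum_y pderiv f P y * V y.
Proof.
apply: (derive1_quadratic_error _ _ (L * (\sum_y `|V y|) ^+ 2)) => t.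
have -> : (fun y => P y + 0 * V y) = P by apply/funext => y; rewrite mul0r addr0.
have -> : t * \sum_y pderiv f P y * V y = \sum_y pderiv f P y * (t * V y).
  by rewrite mulr_sumr; apply: eq_bigr => y _; rewrite mulrCA.
apply: le_trans (first_order_error P (fun y => t * V y)) _.
have -> : \sum_y `|t * V y| = `|t| * \sum_y `|V y|.
  by rewrite mulr_sumr; apply: eq_bigr => y _; rewrite normrM.
by rewrite exprMn real_normK ?num_real // mulrCA mulrC.
Qed.

End FirstOrderError.

(** * Deviations from the mean *)

Section MeanDeviation.
Context {R : realType} {N : nat}.
Implicit Types (x y : 'I_N -> R).

Lemma sum_dev_meanK x : \sum_k (x k - meanK x) = 0.
Proof.
rewrite sumrB sumr_const card_ord /meanK.
case: N x => [|N'] x; first by rewrite mulr0n subr0 big_ord0.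
by rewrite -mulrnAl -mulr_natr mulVf ?pnatr_eq0 // mul1r subrr.
Qed.

Lemma sum_dev_meanK_mulDr x a y :
  \sum_k (x k - meanK x) * (a + y k) = \sum_k (x k - meanK x) * y k.
Proof.
under eq_bigr do rewrite mulrDr.
by rewrite big_split /= -mulr_suml sum_dev_meanK mul0r add0r.
Qed.

Lemma sum_normr_dev_le x : \sum_k `|x k - meanK x| <= 2 * \sum_k `|x k|.
Proof.
apply: le_trans (_ : \sum_k (`|x k| + `|meanK x|) <= _).
  by apply: ler_sum => k _; apply: ler_normB.
rewrite big_split /= sumr_const card_ord mulr2n mulrDl mul1r lerD2l.
rewrite /meanK normrM ger0_norm ?invr_ge0 // -mulrnAl -mulr_natr.
case: N x => [|N'] x; first by rewrite mulr0 mul0r big_ord0.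
by rewrite mulVf ?pnatr_eq0 // mul1r ler_norm_sum.
Qed.

Lemma natr_mul_covK x y : (0 < N)%N ->
  N%:R * covK x y = \sum_k (x k - meanK x) * y k.
Proof.
move=> N0; rewrite /covK mulrA mulfV ?pnatr_eq0 -?lt0n // mul1r.
rewrite -(sum_dev_meanK_mulDr x (- meanK y) y).
by apply: eq_bigr => k _; rewrite [- _ + _]addrC.
Qed.

Lemma is_derive_sum_sqr_dev (z : 'I_N -> R -> R) (dz : 'I_N -> R) (t0 : R) :
  (forall k, is_derive t0 (1 : R) (z k) (dz k)) ->
  is_derive t0 (1 : R) (fun t => \sum_k (z k t - meanK (z^~ t)) ^+ 2)
    (2 * \sum_k (z k t0 - meanK (z^~ t0)) * dz k).
Proof.
move=> dzE.
have := is_derive_sum (fun k => is_deriveX 2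
  (is_deriveB (dzE k) (is_deriveZ (N%:R^-1) (is_derive_sum dzE)))).
have -> : \sum_k (z k - N%:R^-1 *: \sum_i z i) ^+ 2
    = (fun t => \sum_k (z k t - meanK (z^~ t)) ^+ 2).
  by apply/funext => t; rewrite !fct_sumE /=; apply: eq_bigr => k _; rewrite exprfctE.
move/is_derive_eq; apply.
have := sum_dev_meanK_mulDr (z^~ t0) (- (N%:R^-1 * \sum_i dz i)) dz.
rewrite /= => <-; rewrite mulr_sumr.
apply: eq_bigr => k _; rewrite fct_sumE /= expr1.
rewrite [X in 2 * X](_ : _ = z k t0 - meanK (z^~ t0)) //.
rewrite /GRing.scale /=; ring.
Qed.

End MeanDeviation.

(** * Multilinear maps on boxes *)

Definition boxed {R : realType} {X : Type} (r : R) (z : X -> R) : Prop :=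
  forall c, `|z c| <= r.

Section Multilinear.
Context {R : realType} {D : nat} {K : 'I_D -> nat} {n : forall l, 'I_(K l) -> nat}
  {m : 'I_D -> nat} {l : 'I_D} {Phi : (LCoord n l -> R) -> 'I_(m l) -> R}.
Hypothesis Phi_multilinear : multilinear Phi.
Implicit Types (z v w : LCoord n l -> R) (c : LCoord n l) (k : 'I_(K l)).

Lemma sum_LCoord (F : LCoord n l -> R) :
  \sum_c F c = \sum_(k < K l) \sum_(i < n l k) F (existT _ k i).
Proof.
rewrite (@sig_big_dep _ _ _ 'I_(K l) (fun k => 'I_(n l k)) xpredT (fun _ => xpredT)
  (fun k i => F (existT _ k i))).
by apply: eq_bigr => -[].
Qed.

Lemma sum_core_le_sum (F : LCoord n l -> R) k :
  (forall c, 0 <= F c) -> \sum_(j < n l k) F (existT _ k j) <= \sum_c F c.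
Proof.
move=> F0; rewrite sum_LCoord.
apply: (ler_term_sum (fun k => \sum_(j < n l k) F (existT _ k j))) => k'.
exact: sumr_ge0.
Qed.

Definition unit_core k (i : 'I_(n l k)) : LCoord n l -> R :=
  fun c => if c == existT _ k i then 1 else 0.

Lemma splice_id z k : splice z z k = z.
Proof. by apply/funext => c; rewrite /splice; case: (tag c == k). Qed.

Lemma boxed_splice_unit_core (r : R) z k j :
  1 <= r -> boxed r z -> boxed r (splice z (unit_core k j) k).
Proof.
move=> r1 zr c; rewrite /splice /unit_core; case: ifP => _; last exact: zr.
by case: (c == _); rewrite ?normr1 ?normr0 // (le_trans ler01).
Qed.

Lemma multilinear_splice0 z k i : Phi (splice z (fun _ => 0) k) i = 0.
Proof.
have := Phi_multilinear k z (fun _ => 0) (fun _ => 0) 1 i.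
have -> : (fun _ : LCoord n l => 1 * 0 + 0) = (fun _ => 0 : R).
  by apply/funext => c; rewrite mulr0 addr0.
lra.
Qed.

Lemma multilinear_sum (J : Type) (s : seq J) (a : J -> R) (v : J -> LCoord n l -> R)
    z k i :
  Phi (splice z (fun c => \sum_(j <- s) a j * v j c) k) i
  = \sum_(j <- s) a j * Phi (splice z (v j) k) i.
Proof.
elim: s => [|x s IHs].
  by under eq_fun do rewrite big_nil; rewrite multilinear_splice0 big_nil.
by under eq_fun do rewrite big_cons; rewrite Phi_multilinear IHs big_cons.
Qed.

Lemma multilinear_expand z v k i :
  Phi (splice z v k) i
  = \sum_(j < n l k) v (existT _ k j) * Phi (splice z (unit_core k j) k) i.
Proof.
rewrite -multilinear_sum; congr (Phi _ i); apply/funext => -[k' j'].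
rewrite /splice /=; case: eqP => // <-.
rewrite (bigD1 j') //= /unit_core eqxx mulr1 big1 ?addr0 // => j /negPf jj.
by rewrite eq_Tagged /= eq_sym jj mulr0.
Qed.

(* Induction on the number j of free cores: the cores >= j are frozen at an
   arbitrary w, and core j is expanded in the unit basis. *)
Lemma multilinear_bounded (r : R) :
  exists M, 0 <= M /\ forall z (i : 'I_(m l)), boxed r z -> `|Phi z i| <= M.
Proof.
suff bounded_free_below j : (j <= K l)%N -> forall w, exists M, 0 <= M /\
    forall z (i : 'I_(m l)), (forall c, (tag c < j)%N -> `|z c| <= r) ->
      (forall c, (j <= tag c)%N -> z c = w c) -> `|Phi z i| <= M.
  have [M [M0 HM]] := bounded_free_below _ (leqnn _) (fun _ => 0).
  exists M; split=> // z i zr; apply: HM => [c _|c]; first exact: zr.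
  by rewrite leqNgt ltn_ord.
elim: j => [_ w|j IHj jK w].
  exists (\sum_i `|Phi w i|); split=> [|z i _ zw]; first exact: sumr_ge0.
  have -> : z = w by apply/funext => c; apply: zw.
  exact: (ler_term_sum (fun i => `|Phi w i|)).
pose kj : 'I_(K l) := Ordinal jK.
have /choice[M HM] (i0 : 'I_(n l kj)) := IHj (ltnW jK) (splice w (unit_core kj i0) kj).
exists (\sum_i0 `|r| * M i0); split=> [|z i zr zw].
  by apply: sumr_ge0 => i0 _; rewrite mulr_ge0 //; case: (HM i0).
rewrite -(splice_id z kj) multilinear_expand.
apply: le_trans (ler_norm_sum _ _ _) _; apply: ler_sum => i0 _.
rewrite normrM; apply: ler_pM => //; first by apply: le_trans (ler_norm r); apply: zr.
have [_ ->] // := HM i0 => c cj; rewrite /splice.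
  by case: eqP => [cE|_]; [move: cj; rewrite cE ltnn | apply: zr; apply: ltnW].
case: eqP => // /eqP ckj; apply: zw.
by rewrite ltn_neqAle cj andbT eq_sym.
Qed.

Lemma multilinear_sub_splice z w k i :
  Phi z i - Phi (splice z w k) i = Phi (splice z (fun c => z c - w c) k) i.
Proof.
have := Phi_multilinear k z (fun c => z c - w c) w 1 i.
under eq_fun do rewrite mul1r subrK.
by rewrite splice_id mul1r => ->; rewrite addrK.
Qed.

Lemma normr_multilinear_sub_splice_le (r B : R) z w k i :
  1 <= r -> (forall z' (i' : 'I_(m l)), boxed r z' -> `|Phi z' i'| <= B) -> boxed r z ->
  `|Phi z i - Phi (splice z w k) i| <= B * \sum_c `|z c - w c|.
Proof.
move=> r1 HB zr; rewrite multilinear_sub_splice multilinear_expand.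
apply: le_trans (ler_norm_sum _ _ _) _.
apply: le_trans (_ : \sum_(j < n l k) B * `|z (existT _ k j) - w (existT _ k j)| <= _).
  apply: ler_sum => j _; rewrite normrM mulrC ler_wpM2r //.
  by apply: HB; apply: boxed_splice_unit_core.
have B0 : 0 <= B by apply: le_trans (HB z i zr).
rewrite -mulr_sumr; apply: ler_wpM2l => //.
exact: (sum_core_le_sum (fun c => `|z c - w c|)).
Qed.

(* Same induction, now replacing the cores of z by those of w one at a time. *)
Lemma multilinear_lipschitz (r : R) : 1 <= r ->
  exists M, 0 <= M /\ forall z w (i : 'I_(m l)), boxed r z -> boxed r w ->
    `|Phi z i - Phi w i| <= M * \sum_c `|z c - w c|.
Proof.
move=> r1; have [B [B0 HB]] := multilinear_bounded r.
suff lipschitz_agree_above j : (j <= K l)%N -> exists M, 0 <= M /\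
    forall z w (i : 'I_(m l)), boxed r z -> boxed r w ->
      (forall c, (j <= tag c)%N -> z c = w c) ->
      `|Phi z i - Phi w i| <= M * \sum_c `|z c - w c|.
  have [M [M0 HM]] := lipschitz_agree_above _ (leqnn _).
  exists M; split=> // z w i zr wr; apply: HM => // c.
  by rewrite leqNgt ltn_ord.
elim: j => [_|j IHj jK].
  exists 0; split=> // z w i _ _ zw.
  have -> : z = w by apply/funext => c; apply: zw.
  by rewrite subrr normr0 mul0r.
have [M [M0 HM]] := IHj (ltnW jK).
pose kj : 'I_(K l) := Ordinal jK.
exists (B + M); split=> [|z w i zr wr zw]; first exact: addr_ge0.
pose y := splice z w kj.
have yr : boxed r y by move=> c; rewrite /y /splice; case: ifP.
have yw c : (j <= tag c)%N -> y c = w c.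
  rewrite /y /splice; case: eqP => // /eqP ckj cj; apply: zw.
  by rewrite ltn_neqAle cj andbT eq_sym.
rewrite -(subrKA (Phi y i)) mulrDl; apply: le_trans (ler_normD _ _) (lerD _ _).
  exact: normr_multilinear_sub_splice_le r1 HB zr.
apply: le_trans (HM y w i yr wr yw) _; rewrite ler_wpM2l // ler_sum // => c _.
by rewrite /y /splice; case: ifP; rewrite ?subrr ?normr0.
Qed.

End Multilinear.

Lemma multilinear_box_bounds {R : realType} {D : nat} {K : 'I_D -> nat}
    {n : forall l, 'I_(K l) -> nat} {m : 'I_D -> nat}
    {Phi : forall l, (LCoord n l -> R) -> 'I_(m l) -> R} :
  (forall l, multilinear (Phi l)) ->
  exists M : R -> R, forall r, 1 <= r -> 0 <= M r /\ forall l z w i,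
    boxed r z -> boxed r w ->
    `|Phi l z i| <= M r /\ `|Phi l z i - Phi l w i| <= M r * \sum_c `|z c - w c|.
Proof.
move=> Phi_multilinear.
suff /choice[M HM] (r : R) : exists M, 1 <= r -> 0 <= M /\ forall l z w i,
    boxed r z -> boxed r w ->
    `|Phi l z i| <= M /\ `|Phi l z i - Phi l w i| <= M * \sum_c `|z c - w c|.
  by exists M.
have [r1|_] := leP 1 r; last by exists 0.
have /choice[B HB] l := multilinear_bounded (Phi_multilinear l) r.
have /choice[L HL] l := multilinear_lipschitz (Phi_multilinear l) r r1.
have BL0 l : 0 <= B l + L l by rewrite addr_ge0 //; [case: (HB l) | case: (HL l)].
exists (\sum_l (B l + L l)) => _; split=> [|l z w i zr wr]; first exact: sumr_ge0.
have BLM : B l + L l <= \sum_l (B l + L l) by apply: (ler_term_sum (fun l => B l + L l)).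
split.
  case: (HB l) => _ /(_ z i zr) /le_trans; apply; apply: le_trans BLM.
  by rewrite lerDl; case: (HL l).
case: (HL l) => _ /(_ z w i zr wr) /le_trans; apply; rewrite ler_wpM2r ?sumr_ge0 //.
by apply: le_trans BLM; rewrite lerDr; case: (HB l).
Qed.

(** * The gradient of the loss *)

Definition gradF_lip_const {R : realType} {D : nat} (m : 'I_D -> nat) (L G M : R) : R :=
  #|{: OCoord m}|%:R * (L * #|{: OCoord m}|%:R * M ^+ 2 + G * M).

Section LossGradient.
Context {R : realType} {D : nat} {K : 'I_D -> nat} {n : forall l, 'I_(K l) -> nat}
  {m : 'I_D -> nat} {Phi : forall l, (LCoord n l -> R) -> 'I_(m l) -> R}.
Hypothesis Phi_multilinear : forall l, multilinear (Phi l).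
Implicit Types (th : Coord n -> R) (l : 'I_D).

Lemma sum_Coord (F : Coord n -> R) :
  \sum_c F c = \sum_(l < D) \sum_(c : LCoord n l) F (existT _ l c).
Proof.
rewrite (@sig_big_dep _ _ _ 'I_D (LCoord n) xpredT (fun _ => xpredT)
  (fun l c => F (existT _ l c))).
by apply: eq_bigr => -[].
Qed.

Lemma csumE (F : Coord n -> R) : csum F = \sum_c F c.
Proof. by rewrite sum_Coord; apply: eq_bigr => l _; rewrite sum_LCoord. Qed.

Lemma osumE (F : OCoord m -> R) : osum F = \sum_o F o.
Proof.
rewrite /osum (@sig_big_dep _ _ _ 'I_D (fun l => 'I_(m l)) xpredT (fun _ => xpredT)
  (fun l j => F (existT _ l j))).
by apply: eq_bigr => -[].
Qed.

Lemma sum_layer_le_sum (F : Coord n -> R) l : (forall c, 0 <= F c) ->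
  \sum_(c : LCoord n l) F (existT _ l c) <= \sum_c F c.
Proof.
move=> F0; rewrite sum_Coord.
apply: (ler_term_sum (fun l => \sum_(c : LCoord n l) F (existT _ l c))) => l'.
exact: sumr_ge0.
Qed.

Lemma sum_out_layer_le_sum (F : OCoord m -> R) l : (forall o, 0 <= F o) ->
  \sum_(j < m l) F (existT _ l j) <= \sum_o F o.
Proof.
move=> F0; rewrite -osumE.
apply: (ler_term_sum (fun l => \sum_(j < m l) F (existT _ l j))) => l'.
exact: sumr_ge0.
Qed.

Lemma Phi_layer_bumpc th l (k : 'I_(K l)) (i : 'I_(n l k)) t j :
  Phi l (layer (bumpc th (coord k i) t) l) j
  = Phi l (layer th l) j + t * Phi l (splice (layer th l) (unit_core k i) k) j.
Proof.
have -> : layer (bumpc th (coord k i) t) l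
    = splice (layer th l) (fun c => t * unit_core k i c + layer th l c) k.
  apply/funext => -[k' i'].
  rewrite /layer /bumpc /splice /coord /unit_core /= eq_Tagged /=.
  case: (eqVneq k' k) => [E|k'k]; first by subst k'; case: (_ == _); lra.
  by rewrite ifN ?addr0 //; apply: contra k'k => /eq_tag /= ->.
by rewrite Phi_multilinear splice_id addrC.
Qed.

Lemma layer_bumpc_other th l l' (k : 'I_(K l)) (i : 'I_(n l k)) t :
  l' != l -> layer (bumpc th (coord k i) t) l' = layer th l'.
Proof.
move=> l'l; apply/funext => c; rewrite /layer /bumpc ifN ?addr0 //.
by apply: contra l'l => /eq_tag /= ->.
Qed.

Context {f : (OCoord m -> R) -> R} {L : R}.
Hypothesis L_ge0 : 0 <= L.
Hypothesis f_pderiv : forall P o, derivable (fun t : R => f (bumpc P o t)) 0 1.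
Hypothesis pderiv_lipschitz : forall P Q o,
  `|pderiv f P o - pderiv f Q o| <= L * \sum_o' `|P o' - Q o'|.

(* Only layer l depends on the coordinate (l, k, i), and it does so affinely. *)
Lemma gradF_splice th l (k : 'I_(K l)) (i : 'I_(n l k)) :
  gradF Phi f th (coord k i)
  = \sum_(j < m l) pderiv f (layer_tensors Phi th) (existT _ l j)
                   * Phi l (splice (layer th l) (unit_core k i) k) j.
Proof.
pose T := layer_tensors Phi th.
pose V o := layer_tensors Phi (bumpc th (coord k i) 1) o - T o.
have lineE : (fun t => f (layer_tensors Phi (bumpc th (coord k i) t)))
    = (fun t => f (fun o => T o + t * V o)).
  apply/funext => t; congr f; apply/funext => -[l' j].
  rewrite /V /T /layer_tensors /=; case: (eqVneq l' l) => [E|l'l].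
    by subst l'; rewrite !Phi_layer_bumpc; lra.
  by rewrite !layer_bumpc_other //; lra.
rewrite /gradF /pderiv /lossF lineE (derive1_along_line L_ge0 f_pderiv pderiv_lipschitz).
rewrite -osumE /osum (bigD1 l) //= [X in _ + X]big1 ?addr0 => [|l' l'l].
  apply: eq_bigr => j _; rewrite /V /T /layer_tensors /= Phi_layer_bumpc.
  by congr (_ * _); lra.
by apply: big1 => j _; rewrite /V /T /layer_tensors /= layer_bumpc_other // subrr mulr0.
Qed.

Lemma core_euler th l (k : 'I_(K l)) :
  \sum_(i < n l k) th (coord k i) * gradF Phi f th (coord k i)
  = \sum_(j < m l) pderiv f (layer_tensors Phi th) (existT _ l j) * Phi l (layer th l) j.
Proof.
under eq_bigr do rewrite gradF_splice mulr_sumr.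
rewrite exchange_big /=; apply: eq_bigr => j _.
rewrite -[in RHS](splice_id (layer th l) k) (multilinear_expand (Phi_multilinear l)).
by rewrite mulr_sumr; apply: eq_bigr => i _; rewrite /layer /coord mulrCA.
Qed.

Section GradientLipschitz.
Context {r M : R}.
Hypotheses (r_ge1 : 1 <= r) (M_ge0 : 0 <= M).
Hypothesis Phi_box : forall l (z w : LCoord n l -> R) j, boxed r z -> boxed r w ->
  `|Phi l z j| <= M /\ `|Phi l z j - Phi l w j| <= M * \sum_c `|z c - w c|.
Variables (th th' : Coord n -> R).
Hypotheses (th_boxed : boxed r th) (th'_boxed : boxed r th').

Let layer_boxed l {t : Coord n -> R} : boxed r t -> boxed r (layer t l).
Proof. by move=> tr c; apply: tr. Qed.

Lemma layer_tensors_lipschitz o :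
  `|layer_tensors Phi th' o - layer_tensors Phi th o| <= M * \sum_c `|th' c - th c|.
Proof.
case: o => l j; have [_ /le_trans ->] // := Phi_box _ _ _ j
  (layer_boxed l th'_boxed) (layer_boxed l th_boxed).
by rewrite ler_wpM2l // (sum_layer_le_sum (fun c => `|th' c - th c|)).
Qed.

Lemma pderiv_layer_tensors_lipschitz o :
  `|pderiv f (layer_tensors Phi th') o - pderiv f (layer_tensors Phi th) o|
  <= L * (#|{: OCoord m}|%:R * (M * \sum_c `|th' c - th c|)).
Proof.
apply: le_trans (pderiv_lipschitz _ _ _) _; rewrite ler_wpM2l //.
apply: le_trans (_ : \sum_(o : OCoord m) M * \sum_c `|th' c - th c| <= _).
  by apply: ler_sum => o' _; apply: layer_tensors_lipschitz.
by rewrite sumr_const mulr_natl.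
Qed.

Lemma Phi_splice_unit_core_lipschitz l (k : 'I_(K l)) i j :
  `|Phi l (splice (layer th' l) (unit_core k i) k) j| <= M /\
  `|Phi l (splice (layer th' l) (unit_core k i) k) j
    - Phi l (splice (layer th l) (unit_core k i) k) j| <= M * \sum_c `|th' c - th c|.
Proof.
have [-> /le_trans -> //] := Phi_box _ _ _ j
  (boxed_splice_unit_core _ _ k i r_ge1 (layer_boxed l th'_boxed))
  (boxed_splice_unit_core _ _ k i r_ge1 (layer_boxed l th_boxed)).
rewrite ler_wpM2l //; apply: le_trans (sum_layer_le_sum (fun c => `|th' c - th c|) l _) => //.
by apply: ler_sum => c _; rewrite /splice; case: ifP; rewrite ?subrr ?normr0.
Qed.

Lemma gradF_lipschitz (G : R) c : 0 <= G ->
  (forall o, `|pderiv f (layer_tensors Phi th) o| <= G) ->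
  `|gradF Phi f th' c - gradF Phi f th c|
    <= gradF_lip_const m L G M * \sum_c `|th' c - th c|.
Proof.
case: c => l [k i] G0 dG.
rewrite (gradF_splice th' l k i) (gradF_splice th l k i) -sumrB.
have N0 : 0 <= \sum_c `|th' c - th c| by apply: sumr_ge0.
set N := \sum_c _ in N0 *.
set X := (L * #|{: OCoord m}|%:R * M ^+ 2 + G * M) * N.
have X0 : 0 <= X by rewrite mulr_ge0 // addr_ge0 // !mulr_ge0.
apply: le_trans (ler_norm_sum _ _ _) _.
apply: le_trans (_ : \sum_(j < m l) X <= _).
  apply: ler_sum => j _.
  have [P'M P'P] := Phi_splice_unit_core_lipschitz l k i j.
  have d'd := pderiv_layer_tensors_lipschitz (existT _ l j).
  set d' := pderiv f _ _ in d'd *; set d := pderiv f _ _ in d'd *.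
  set P' := Phi l _ j in P'M P'P *; set P := Phi l _ j in P'P *.
  have -> : d' * P' - d * P = (d' - d) * P' + d * (P' - P) by ring.
  apply: le_trans (ler_normD _ _) _; rewrite !normrM.
  have -> : X = L * (#|{: OCoord m}|%:R * (M * N)) * M + G * (M * N) by rewrite /X; ring.
  by apply: lerD; apply: ler_pM => //; apply: dG.
apply: le_trans (sum_out_layer_le_sum (fun _ : OCoord m => X) l (fun _ => X0)) _.
by rewrite sumr_const /X /gradF_lip_const mulr_natl mulrA mulrnAl.
Qed.

End GradientLipschitz.

End LossGradient.

(** * Norm deviation along the SAM flow *)

Section SamFlow.
Context {R : realType} {D : nat} {K : 'I_D -> nat} {n : forall l, 'I_(K l) -> nat}
  {m : 'I_D -> nat} {Phi : forall l, (LCoord n l -> R) -> 'I_(m l) -> R}.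
Hypothesis Phi_multilinear : forall l, multilinear (Phi l).
Context {f : (OCoord m -> R) -> R} {L : R}.
Hypothesis L_ge0 : 0 <= L.
Hypothesis f_pderiv : forall P o, derivable (fun t : R => f (bumpc P o t)) 0 1.
Hypothesis pderiv_lipschitz : forall P Q o,
  `|pderiv f P o - pderiv f Q o| <= L * \sum_o' `|P o' - Q o'|.
Context {rho : R} {Theta : R -> Coord n -> R} {t0 : R}.
Hypothesis sam_flow : forall x,
  is_derive t0 (1 : R) (fun t => Theta t x) (- samgrad Phi f rho (Theta t0) x).

Let th := Theta t0.
Let g := gradF Phi f th.
Let u := uD Phi f th.
Let thS y := th y + rho * u * g y.
Let gS := gradF Phi f thS.

Lemma is_derive_coresq_sam l k : is_derive t0 (1 : R) (fun t => coresq (Theta t) l k)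
  (- 2 * \sum_i th (coord k i) * gS (coord k i)).
Proof.
have := is_derive_sum (fun i => is_deriveX 2 (sam_flow (coord k i))).
have -> : \sum_i (fun t => Theta t (coord k i)) ^+ 2 = (fun t => coresq (Theta t) l k).
  by apply/funext => t; rewrite fct_sumE; apply: eq_bigr => i _; rewrite exprfctE.
move/is_derive_eq; apply; rewrite mulr_sumr; apply: eq_bigr => i _.
by rewrite /GRing.scale /= /samgrad -/th /gS /thS /u /g; ring.
Qed.

Lemma is_derive_normdev_sam l : is_derive t0 (1 : R) (fun t => normdev (Theta t) l)
  (2 * \sum_k (coresq th l k - meanK (fun i => coresq th l i))
         * (- 2 * \sum_i th (coord k i) * gS (coord k i))).
Proof. exact: is_derive_sum_sqr_dev (is_derive_coresq_sam l). Qed.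

Lemma normdev_sam_remainder l : (0 < K l)%N ->
  derive1 (fun t => normdev (Theta t) l) t0
    - 4 * rho * u * (K l)%:R * covK (fun k => coresq th l k) (fun k => coresq g l k)
  = 4 * rho * u * \sum_k (coresq th l k - meanK (fun i => coresq th l i))
                   * \sum_i g (coord k i) * (gS (coord k i) - g (coord k i)).
Proof.
move=> Kl0; have [_ dQE] := is_derive_normdev_sam l; rewrite derive1E dQE.
rewrite -mulrA natr_mul_covK //.
pose E := \sum_(j < m l) pderiv f (layer_tensors Phi thS) (existT _ l j) * Phi l (layer thS l) j.
have eulerS (k : 'I_(K l)) : \sum_i th (coord k i) * gS (coord k i)
    = E - rho * u * \sum_i g (coord k i) * gS (coord k i).
  rewrite /E -(core_euler Phi_multilinear L_ge0 f_pderiv pderiv_lipschitz thS l k).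
  by rewrite mulr_sumr -sumrB; apply: eq_bigr => i _; rewrite /gS /thS; ring.
under eq_bigr do rewrite eulerS.
pose w (k : 'I_(K l)) := coresq th l k - meanK (fun i => coresq th l i).
pose B (k : 'I_(K l)) := \sum_i g (coord k i) * gS (coord k i).
(* The deviations w k sum to zero, so the k-independent term E cancels. *)
have -> : \sum_k w k * (-2 * (E - rho * u * B k)) = \sum_k w k * (2 * rho * u * B k).
  rewrite -(sum_dev_meanK_mulDr _ (2 * E)); apply: eq_bigr => k _.
  by congr (_ * _); ring.
rewrite !mulr_sumr -sumrN -big_split; apply: eq_bigr => k _ /=.
have -> : \sum_i g (coord k i) * (gS (coord k i) - g (coord k i)) = B k - coresq g l k.
  by rewrite /B /coresq -sumrB; apply: eq_bigr => i _; rewrite mulrBr expr2.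
by rewrite /w; ring.
Qed.

Lemma normr_uD_gradF_le1 c : `|u * g c| <= 1.
Proof. by rewrite /u /uD csumE; apply: normr_normalized_le1. Qed.

Lemma normdev_sam_remainder_le l : (0 < K l)%N -> 0 <= rho ->
  `|derive1 (fun t => normdev (Theta t) l) t0
      - 4 * rho * u * (K l)%:R * covK (fun k => coresq th l k) (fun k => coresq g l k)|
  <= 4 * rho * (\sum_k `|coresq th l k - meanK (fun i => coresq th l i)|)
       * \sum_c `|gS c - g c|.
Proof.
move=> Kl0 rho0; rewrite normdev_sam_remainder // -!mulrA 2!normrM.
rewrite (ger0_norm rho0) ger0_norm // ler_wpM2l // ler_wpM2l //.
rewrite mulr_sumr mulr_suml; apply: le_trans (ler_norm_sum _ _ _) _; apply: ler_sum => k _.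
rewrite mulrCA normrM ler_wpM2l // mulr_sumr.
apply: le_trans (ler_norm_sum _ _ _) _.
apply: le_trans (_ : \sum_i `|gS (coord k i) - g (coord k i)| <= _).
  apply: ler_sum => i _; rewrite mulrA normrM ler_piMl //.
  exact: normr_uD_gradF_le1.
apply: le_trans (sum_layer_le_sum (fun c => `|gS c - g c|) l _) => //.
exact: (sum_core_le_sum (fun c => `|gS (existT _ l c) - g (existT _ l c)|)).
Qed.

Lemma sam_perturbation_le c : 0 <= rho -> `|thS c - th c| <= rho.
Proof.
move=> rho0; rewrite /thS addrC addKr -mulrA normrM ger0_norm //.
by rewrite ler_piMr // normr_uD_gradF_le1.
Qed.

Section Bounds.
Context {S M G : R}.
Hypothesis core_norms_le : forall l, \sum_k Num.sqrt (coresq th l k) <= S.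
Hypotheses (M_ge0 : 0 <= M) (G_ge0 : 0 <= G).
Hypothesis Phi_box : forall l (z w : LCoord n l -> R) j,
  boxed (S + 1) z -> boxed (S + 1) w ->
  `|Phi l z j| <= M /\ `|Phi l z j - Phi l w j| <= M * \sum_c `|z c - w c|.
Hypothesis pderiv_le : forall o, `|pderiv f (layer_tensors Phi th) o| <= G.

Let S_ge0 (l : 'I_D) : 0 <= S.
Proof. by apply: le_trans (core_norms_le l); apply: sumr_ge0 => k _; apply: sqrtr_ge0. Qed.

Lemma sam_sum_normr_dev_le l :
  \sum_k `|coresq th l k - meanK (fun i => coresq th l i)| <= 2 * S ^+ 2.
Proof.
apply: le_trans (sum_normr_dev_le _) _; rewrite ler_wpM2l //.
have sq0 k : 0 <= coresq th l k by apply: sumr_ge0 => i _; apply: sqr_ge0.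
apply: le_trans (_ : \sum_k Num.sqrt (coresq th l k) ^+ 2 <= _).
  by apply: ler_sum => k _; rewrite sqr_sqrtr // ger0_norm.
apply: le_trans (sum_sqr_le_sqr_sum _ (fun k => sqrtr_ge0 _)) _.
by rewrite ler_sqr ?nnegrE ?sumr_ge0 ?(S_ge0 l).
Qed.

Lemma sam_boxed : 0 <= rho <= 1 -> boxed (S + 1) th /\ boxed (S + 1) thS.
Proof.
case/andP=> rho0 rho1.
have thr : boxed S th.
  move=> [l [k i]]; apply: le_trans (normr_le_sqrt_sum_sqr (fun i => th (coord k i)) i) _.
  apply: le_trans (core_norms_le l).
  by apply: (ler_term_sum (fun k => Num.sqrt (coresq th l k))) => k'; apply: sqrtr_ge0.
split=> c; first by apply: le_trans (thr c) _; rewrite lerDl.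
have -> : thS c = th c + (thS c - th c) by rewrite addrC subrK.
apply: le_trans (ler_normD _ _) (lerD (thr c) _).
exact: le_trans (sam_perturbation_le c rho0) rho1.
Qed.

Lemma normdev_sam_bound l : (0 < K l)%N -> 0 <= rho <= 1 ->
  `|derive1 (fun t => normdev (Theta t) l) t0
      - 4 * rho * u * (K l)%:R * covK (fun k => coresq th l k) (fun k => coresq g l k)|
  <= 8 * S ^+ 2 * #|{: Coord n}|%:R ^+ 2 * gradF_lip_const m L G M * rho ^+ 2.
Proof.
move=> Kl0 rho01; have /andP[rho0 _] := rho01; have [thr thSr] := sam_boxed rho01.
apply: le_trans (normdev_sam_remainder_le l Kl0 rho0) _.
set NC := #|{: Coord n}|%:R; set Cg := gradF_lip_const m L G M.
have Cg0 : 0 <= Cg by rewrite /Cg /gradF_lip_const mulr_ge0 // addr_ge0 // !mulr_ge0.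
have r1 : 1 <= S + 1 by rewrite lerDr (S_ge0 l).
have dth : \sum_c `|thS c - th c| <= NC * rho.
  apply: le_trans (ler_sum _ (fun c _ => sam_perturbation_le c rho0)) _.
  by rewrite sumr_const mulr_natl.
have dg : \sum_c `|gS c - g c| <= NC * (Cg * (NC * rho)).
  apply: le_trans (_ : \sum_(c : Coord n) Cg * (NC * rho) <= _); last first.
    by rewrite sumr_const -mulr_natl.
  apply: ler_sum => c _; apply: le_trans (ler_wpM2l Cg0 dth).
  exact: (gradF_lipschitz Phi_multilinear L_ge0 f_pderiv pderiv_lipschitz r1 M_ge0 Phi_box
    _ _ thr thSr _ c G_ge0 pderiv_le).
have -> : 8 * S ^+ 2 * NC ^+ 2 * Cg * rho ^+ 2
    = 4 * rho * (2 * S ^+ 2) * (NC * (Cg * (NC * rho))) by ring.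
apply: ler_pM => //; first by rewrite !mulr_ge0 ?sumr_ge0.
  exact: sumr_ge0.
by apply: ler_wpM2l; [rewrite mulr_ge0 | exact: sam_sum_normr_dev_le].
Qed.

End Bounds.

End SamFlow.


Theorem theorem5 (R : realType) (D : nat) (K : 'I_D -> nat)
  (n : forall l, 'I_(K l) -> nat) (m : 'I_D -> nat)
  (Phi : forall l, (LCoord n l -> R) -> 'I_(m l) -> R) :
  (forall l, (2 <= K l)%N) ->
  (forall l, multilinear (Phi l)) ->
  exists C : R -> (CIdx K -> R) -> R -> R,
  forall (Lhat : R) (f : (OCoord m -> R) -> R),
    (* f has all partial derivatives ... *)
    (forall (X : OCoord m -> R) (o : OCoord m),
        derivable (fun t : R => f (bumpc X o t)) 0 1) ->
    (* ... and its gradient (vector of partials) is Lhat-Lipschitz *)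
    (forall X Y : OCoord m -> R,
        Num.sqrt (osum (fun o => (pderiv f X o - pderiv f Y o) ^+ 2))
        <= Lhat * Num.sqrt (osum (fun o => (X o - Y o) ^+ 2))) ->
  forall (rho : R), 0 < rho -> rho <= 1 ->
  forall (Theta : R -> Coord n -> R) (t0 : R),
    (* SAM flow at time t0:  d/dt G_{k,l} = - tilde g_{k,l} *)
    (forall x : Coord n,
        is_derive t0 1 (fun t => Theta t x) (- samgrad Phi f rho (Theta t0) x)) ->
    (* not all g_{k,l} vanish *)
    (exists x : Coord n, gradF Phi f (Theta t0) x != 0) ->
  forall l : 'I_D,
    derivable (fun t => normdev (Theta t) l) t0 1 /\
    `| derive1 (fun t => normdev (Theta t) l) t0
       - 4 * rho * uD Phi f (Theta t0) * (K l)%:R *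
         covK (fun k => coresq (Theta t0) l k)
              (fun k => coresq (gradF Phi f (Theta t0)) l k) |
    <= C Lhat
         (fun c : CIdx K => Num.sqrt (coresq (Theta t0) (tag c) (tagged c)))
         (Num.sqrt (osum (fun o => pderiv f (layer_tensors Phi (Theta t0)) o ^+ 2)))
       * rho ^+ 2.
Proof.
move=> K_ge2 Phi_multilinear; have [M HM] := multilinear_box_bounds Phi_multilinear.
exists (fun Lh s G => let S := \sum_(l < D) \sum_(k < K l) s (existT _ l k) in
  8 * S ^+ 2 * #|{: Coord n}|%:R ^+ 2 * gradF_lip_const m `|Lh| G (M (S + 1))).
move=> Lhat f f_pderiv f_lip rho rho0 rho1 Theta t0 sam_flow _ l /=.
have pderiv_lipschitz P Q o :
    `|pderiv f P o - pderiv f Q o| <= `|Lhat| * \sum_o' `|P o' - Q o'|.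
  by apply: lipschitz_l2_l1 => {}P {}Q; rewrite -!osumE.
set S := \sum_(l < D) _.
have core_norms_le l' : \sum_k Num.sqrt (coresq (Theta t0) l' k) <= S.
  apply: (ler_term_sum (fun l => \sum_k Num.sqrt (coresq (Theta t0) l k))) => l''.
  by apply: sumr_ge0 => k _; apply: sqrtr_ge0.
have S1 : 1 <= S + 1.
  by rewrite lerDr; apply: le_trans (core_norms_le l); apply: sumr_ge0 => k _; apply: sqrtr_ge0.
have [M0 Phi_box] := HM _ S1.
have pderiv_le o : `|pderiv f (layer_tensors Phi (Theta t0)) o|
    <= Num.sqrt (osum (fun o => pderiv f (layer_tensors Phi (Theta t0)) o ^+ 2)).
  by rewrite osumE; apply: normr_le_sqrt_sum_sqr.
split; first by have [] := is_derive_normdev_sam sam_flow l.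
apply: (normdev_sam_bound Phi_multilinear (normr_ge0 Lhat) f_pderiv pderiv_lipschitz sam_flow
  core_norms_le M0 (sqrtr_ge0 _) Phi_box pderiv_le); first exact: leq_trans (K_ge2 l).
by rewrite ltW.
Qed.
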